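(* Let $a,c>0$ and $b,d<0$ be real numbers with $x_A<x_B$, and let $W_0(z)=1$, $W_1(z)=z$, $W_n(z)=(az+b)W_{n-1}(z)+(cz+d)W_{n-2}(z)$ for $n\ge2$. Then $u,v$ are real and $$u\le x_\Delta^-<x_A<x_\Delta^+\le v<x_B,\qquad u<0<v,$$ and for every $n\ge0$, $(-1)^nW_n(u)>0$ and $W_n(v)>0$. Moreover, both $u$ and $v$ are limits of zeros of $\{W_n(z)\}$.
   Context: Notation: $A(z)=az+b$, $B(z)=cz+d$, $x_A=-b/a$, $x_B=-d/c$, $\Delta_\Delta=c^2-a^2B(x_A)$ (positive here), $x_\Delta^\pm=x_A+\frac{-2c\pm2\sqrt{\Delta_\Delta}}{a^2}$, $g(z)=(1-a)z^2-(b+c)z-d$, $\Delta_g=(b+c)^2+4d(1-a)$, $F=\Delta_g-\Delta_\Delta=d(a-2)^2+bc(2-a)+b^2$. The zeros of $g$ are $x_g^\pm=\frac{b+c}{2(1-a)}\pm\frac{\sqrt{\Delta_g}}{2|1-a|}$ if $a\neq1$, and $x_g^\pm=-d/(b+c)$ if $a=1$ and $b+c\ne0$. Define $(u,v)=(x_\Delta^-,x_\Delta^+)$ if $a<2$ and $F\le0$; $(u,v)=(x_g^-,x_g^+)$ if $a>2$ and $F<0$; $(u,v)=(x_g^+,x_\Delta^+)$ if $a<1$ and $F>0$; and $(u,v)=(x_g^-,x_\Delta^+)$ in all other cases. A number $z^*$ is a limit of zeros of $\{W_n\}$ if there exist zeros $z_n$ of $W_n$ with $z_n\to z^*$. *)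

From Stdlib Require Import Reals.
Open Scope R_scope.

Fixpoint Wr (a b c d : R) (n : nat) (x : R) : R :=
  match n with
  | O => 1
  | S m => match m with
           | O => x
           | S k => (a * x + b) * Wr a b c d m x + (c * x + d) * Wr a b c d k x
           end
  end.

Definition Cx : Type := (R * R)%type.
Definition Cadd (z w : Cx) : Cx := (fst z + fst w, snd z + snd w).
Definition Cmul (z w : Cx) : Cx :=
  (fst z * fst w - snd z * snd w, fst z * snd w + snd z * fst w).
Definition Cof (r : R) : Cx := (r, 0).

Fixpoint Wc (a b c d : R) (n : nat) (z : Cx) : Cx :=
  match n with
  | O => Cof 1
  | S m => match m with
           | O => z
           | S k => Cadd (Cmul (Cadd (Cmul (Cof a) z) (Cof b)) (Wc a b c d m z))
                         (Cmul (Cadd (Cmul (Cof c) z) (Cof d)) (Wc a b c d k z))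
           end
  end.

Definition limit_of_zeros (a b c d : R) (zs : R) : Prop :=
  exists (N : nat) (z : nat -> Cx),
    (forall n, (N <= n)%nat -> Wc a b c d n (z n) = Cof 0) /\
    (forall eps, eps > 0 -> exists M, forall n, (M <= n)%nat ->
        Rsqr (fst (z n) - zs) + Rsqr (snd (z n)) < eps).

Definition xA (a b : R) : R := - b / a.
Definition xB (c d : R) : R := - d / c.
Definition DeltaD (a b c d : R) : R := c ^ 2 - a ^ 2 * (c * xA a b + d).
Definition xDm (a b c d : R) : R := xA a b + (- 2 * c - 2 * sqrt (DeltaD a b c d)) / a ^ 2.
Definition xDp (a b c d : R) : R := xA a b + (- 2 * c + 2 * sqrt (DeltaD a b c d)) / a ^ 2.
Definition Deltag (a b c d : R) : R := (b + c) ^ 2 + 4 * d * (1 - a).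
Definition Ff (a b c d : R) : R := d * (a - 2) ^ 2 + b * c * (2 - a) + b ^ 2.

Definition xgm (a b c d : R) : R :=
  if Req_EM_T a 1 then - d / (b + c)
  else (b + c) / (2 * (1 - a)) - sqrt (Deltag a b c d) / (2 * Rabs (1 - a)).
Definition xgp (a b c d : R) : R :=
  if Req_EM_T a 1 then - d / (b + c)
  else (b + c) / (2 * (1 - a)) + sqrt (Deltag a b c d) / (2 * Rabs (1 - a)).

Definition case1 (a b c d : R) : Prop := a < 2 /\ Ff a b c d <= 0.
Definition case2 (a b c d : R) : Prop := a > 2 /\ Ff a b c d < 0.
Definition case3 (a b c d : R) : Prop := a < 1 /\ Ff a b c d > 0.

Definition uv (a b c d : R) : R * R :=
  if Rlt_dec a 2 then
    if Rle_dec (Ff a b c d) 0 then (xDm a b c d, xDp a b c d)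
    else if Rlt_dec a 1 then (xgp a b c d, xDp a b c d)
    else (xgm a b c d, xDp a b c d)
  else if Rlt_dec 2 a then
    if Rlt_dec (Ff a b c d) 0 then (xgm a b c d, xgp a b c d)
    else (xgm a b c d, xDp a b c d)
  else (xgm a b c d, xDp a b c d).

Definition u (a b c d : R) : R := fst (uv a b c d).
Definition v (a b c d : R) : R := snd (uv a b c d).

(* "u, v are real": whenever the zeros x_g^± of g are used (every case except
   case1), they are genuine real numbers: Delta_g >= 0 if a <> 1, and b + c <> 0
   if a = 1.  (Delta_Delta >= 0 is also asserted.) *)
Definition uv_real (a b c d : R) : Prop :=
  0 <= DeltaD a b c d /\
  (~ case1 a b c d -> (a <> 1 -> 0 <= Deltag a b c d) /\ (a = 1 -> b + c <> 0)).

From Stdlib Require Import Reals Lra Lia Psatz ClassicalEpsilon.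
Open Scope R_scope.

(* At a fixed real x, [Wr n x] solves a linear recurrence with characteristic equation
   l^2 = A(x) l + B(x), A = ax+b, B = cx+d, of discriminant D = A^2 + 4B. Between the roots
   x_Delta^- < x_Delta^+ of D the characteristic roots are complex, [Wr n] oscillates, and once
   their argument is PI/n it is negative there; so an endpoint x_Delta^+ at which every [Wr n] is
   positive is a limit of zeros. Outside, the characteristic roots are real and the sign of
   [Wr n x] is eventually that of the coefficient of the dominant root; that coefficient changes
   sign where x is itself a characteristic root, i.e. at a zero of g, where [Wr n x = x^n]. The
   case split defining (u, v) records which mechanism produces each endpoint, and the left
   endpoint reduces to the right one under x -> -x, (a, b, c, d) -> (a, -b, -c, d). *)

Definition char_disc (a b c d x : R) : R := (a*x+b)^2 + 4*(c*x+d).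
Definition g_poly (a b c d x : R) : R := (1-a)*x^2 - (b+c)*x - d.

Lemma g_poly_char_disc a b c d x :
  4 * g_poly a b c d x = (2*x - (a*x+b))^2 - char_disc a b c d x.
Proof. unfold g_poly, char_disc; ring. Qed.

Lemma char_disc_reflect a b c d x : char_disc a (-b) (-c) d x = char_disc a b c d (-x).
Proof. unfold char_disc; ring. Qed.

Lemma g_poly_reflect a b c d x : g_poly a (-b) (-c) d x = g_poly a b c d (-x).
Proof. unfold g_poly; ring. Qed.

Lemma Wr_SS a b c d k x : Wr a b c d (S (S k)) x =
  (a*x+b) * Wr a b c d (S k) x + (c*x+d) * Wr a b c d k x.
Proof. reflexivity. Qed.

Lemma nat_ind2 (P : nat -> Prop) : P 0%nat -> P 1%nat ->
  (forall k, P k -> P (S k) -> P (S (S k))) -> forall n, P n.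
Proof.
  intros H0 H1 HS n; enough (P n /\ P (S n)) by tauto.
  induction n as [|n [IH0 IH1]]; auto.
Qed.

Lemma Wr_unique a b c d x (f : nat -> R) : f 0%nat = 1 -> f 1%nat = x ->
  (forall k, f (S (S k)) = (a*x+b) * f (S k) + (c*x+d) * f k) ->
  forall n, Wr a b c d n x = f n.
Proof.
  intros H0 H1 HS; apply nat_ind2; auto.
  intros k IH0 IH1; rewrite Wr_SS, IH0, IH1, HS; reflexivity.
Qed.

Lemma Wr_continuous a b c d n : continuity (Wr a b c d n).
Proof.
  revert n; apply nat_ind2.
  - apply continuity_const; intros x y; reflexivity.
  - apply derivable_continuous, derivable_id.
  - intros k H0 H1.
    change (continuity (fun x => (a*x+b) * Wr a b c d (S k) x + (c*x+d) * Wr a b c d k x)).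
    assert (Hlin : forall p q, continuity (fun x => p*x+q))
      by (intros; apply derivable_continuous; reg).
    apply continuity_plus; apply (continuity_mult (fun x => _ * x + _)); auto.
Qed.

Lemma Wc_real a b c d n x : Wc a b c d n (x, 0) = (Wr a b c d n x, 0).
Proof.
  revert n; apply nat_ind2; try reflexivity.
  intros k H0 H1.
  change (Wc a b c d (S (S k)) (x,0)) with
    (Cadd (Cmul (Cadd (Cmul (Cof a) (x,0)) (Cof b)) (Wc a b c d (S k) (x,0)))
          (Cmul (Cadd (Cmul (Cof c) (x,0)) (Cof d)) (Wc a b c d k (x,0)))).
  rewrite H0, H1, Wr_SS.
  unfold Cadd, Cmul, Cof; simpl; f_equal; ring.
Qed.

(* Through this reflection every statement about a right endpoint yields one about a left endpoint. *)
Lemma Wr_reflect a b c d n x : Wr a (-b) (-c) d n x = (-1)^n * Wr a b c d n (-x).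
Proof.
  revert n; apply nat_ind2; [simpl; ring | simpl; ring |].
  intros k H0 H1; rewrite !Wr_SS, H0, H1; simpl; ring.
Qed.

(** * Closed forms of [Wr n x] *)

Lemma Wr_binet a b c d x l1 l2 : l1 <> l2 -> l1 + l2 = a*x+b -> l1 * l2 = -(c*x+d) ->
  forall n, Wr a b c d n x = ((x - l2) * l1^n - (x - l1) * l2^n) / (l1 - l2).
Proof.
  intros Hne Hs Hp; apply Wr_unique.
  - simpl; field; lra.
  - simpl; field; lra.
  - intros k; simpl.
    replace (c*x+d) with (-(l1*l2)) by lra; rewrite <- Hs; field; lra.
Qed.

Lemma Wr_double_root a b c d x l : 2 * l = a*x+b -> l * l = -(c*x+d) ->
  forall n, Wr a b c d n x * l = l^n * (l + INR n * (x - l)).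
Proof.
  intros Hs Hp.
  assert (Hrec : forall k, l^(S (S k)) * (l + INR (S (S k)) * (x - l)) =
     (a*x+b) * (l^(S k) * (l + INR (S k) * (x - l))) + (c*x+d) * (l^k * (l + INR k * (x - l)))).
  { intros k; rewrite !S_INR; simpl; replace (c*x+d) with (-(l*l)) by lra; rewrite <- Hs; ring. }
  apply nat_ind2; [simpl; ring | simpl; ring |].
  intros k H0 H1; rewrite Wr_SS, Hrec, <- H0, <- H1; ring.
Qed.

Lemma Wr_g_root a b c d x : g_poly a b c d x = 0 -> forall n, Wr a b c d n x = x^n.
Proof.
  unfold g_poly; intros Hg; apply Wr_unique; [reflexivity | simpl; ring |].
  intros k; simpl; replace (x * (x * x^k)) with ((x*x)*x^k) by ring.
  replace (x*x) with ((a*x+b)*x + (c*x+d)) by nra; ring.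
Qed.

Lemma Wr_trig a b c d x r t : 0 < r -> r * r = -(c*x+d) -> sin t <> 0 ->
  a*x+b = 2 * r * cos t ->
  forall n, Wr a b c d n x = r^n * (cos (INR n * t) + (x / r - cos t) / sin t * sin (INR n * t)).
Proof.
  intros Hr Hrr Hs HA; apply Wr_unique.
  - simpl; rewrite Rmult_0_l, cos_0, sin_0; ring.
  - simpl; rewrite Rmult_1_l; field; lra.
  - intros k.
    replace (INR (S (S k)) * t) with (INR (S k) * t + t) by (rewrite (S_INR (S k)); ring).
    replace (INR k * t) with (INR (S k) * t - t) at 1 2 by (rewrite (S_INR k); ring).
    rewrite cos_plus, sin_plus, (cos_minus (INR (S k) * t)), (sin_minus (INR (S k) * t)), HA.
    replace (c*x+d) with (-(r*r)) by lra; simpl; ring.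
Qed.

(** * Eventual zeros of [Wr n] *)

Lemma ivt_open (f : R -> R) x y : continuity f -> x < y -> f x * f y < 0 ->
  exists z, x < z < y /\ f z = 0.
Proof.
  intros Hc Hxy Hp; destruct (IVT_cor f x y Hc) as [z [[H1 H2] H3]]; try lra.
  exists z; split; [split|]; auto.
  - destruct H1 as [H1|H1]; auto; subst; rewrite H3 in Hp; lra.
  - destruct H2 as [H2|H2]; auto; subst; rewrite H3 in Hp; lra.
Qed.

Lemma affine_pos_between k l y z x : y <= x <= z -> 0 < k*y + l -> 0 < k*z + l ->
  0 < k*x + l.
Proof. intros; destruct (Rle_dec 0 k); nra. Qed.

Lemma eventually_dominant_sign al be la mu : al <> 0 -> Rabs mu < la ->
  exists M, forall n, (M <= n)%nat -> 0 < al * (al * la^n + be * mu^n).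
Proof.
  intros Hal Hmu.
  assert (Hla : 0 < la) by (pose proof (Rabs_pos mu); lra).
  set (r := Rabs mu / la).
  assert (Hr : 0 <= r < 1).
  { unfold r; split.
    - apply Rmult_le_pos; [apply Rabs_pos | left; apply Rinv_0_lt_compat; lra].
    - apply (Rmult_lt_reg_r la); [lra|]; unfold Rdiv; rewrite Rmult_assoc, Rinv_l; lra. }
  assert (Habs : 0 < Rabs al) by (apply Rabs_pos_lt; auto).
  assert (Hbe : 0 < Rabs be + 1) by (pose proof (Rabs_pos be); lra).
  destruct (pow_lt_1_zero r ltac:(rewrite Rabs_pos_eq; lra) (Rabs al / (Rabs be + 1)))
    as [M HM]; [apply Rdiv_lt_0_compat; lra|].
  exists M; intros n Hn; specialize (HM n Hn).
  rewrite Rabs_pos_eq in HM by (apply pow_le; lra).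
  assert (Hrn : 0 <= r^n) by (apply pow_le; lra).
  assert (Hlan : 0 < la^n) by (apply pow_lt; lra).
  assert (Hsmall : Rabs be * r^n < Rabs al).
  { assert (Hinv : (Rabs be + 1) * / (Rabs be + 1) = 1) by (field; lra).
    unfold Rdiv in HM; nra. }
  assert (Hmun : Rabs (mu^n) = r^n * la^n).
  { rewrite <- RPow_abs, <- Rpow_mult_distr; unfold r; f_equal; field; lra. }
  assert (Hbound : Rabs (al * (be * mu^n)) < al * al * la^n).
  { rewrite !Rabs_mult, Hmun.
    replace (al * al) with (Rabs al * Rabs al) by (rewrite <- Rabs_mult; apply Rabs_pos_eq; nra).
    replace (Rabs al * (Rabs be * (r^n * la^n))) with ((Rabs al * la^n) * (Rabs be * r^n)) by ring.
    replace (Rabs al * Rabs al * la^n) with ((Rabs al * la^n) * Rabs al) by ring.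
    apply Rmult_lt_compat_l; [apply Rmult_lt_0_compat|]; lra. }
  pose proof (Rle_abs (- (al * (be * mu^n)))) as Hle; rewrite Rabs_Ropp in Hle; nra.
Qed.

(* [2x - A + s] is twice the coefficient [x - (A - s)/2] of the dominant root [(A + s)/2]
   in the Binet formula. *)
Lemma Wr_eventually_sign a b c d x :
  0 < char_disc a b c d x -> 0 < a*x+b ->
  2*x - (a*x+b) + sqrt (char_disc a b c d x) <> 0 ->
  exists M, forall n, (M <= n)%nat ->
    0 < (2*x - (a*x+b) + sqrt (char_disc a b c d x)) * Wr a b c d n x.
Proof.
  intros HD HA He.
  set (s := sqrt (char_disc a b c d x)) in *.
  assert (Hs : 0 < s) by (apply sqrt_lt_R0; auto).
  assert (Hss : s * s = char_disc a b c d x) by (apply sqrt_sqrt; lra).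
  set (l1 := (a*x+b + s)/2); set (l2 := (a*x+b - s)/2).
  assert (Hbinet := Wr_binet a b c d x l1 l2 ltac:(unfold l1, l2; lra)
    ltac:(unfold l1, l2; lra) ltac:(unfold l1, l2, char_disc in *; nra)).
  destruct (eventually_dominant_sign (x - l2) (-(x - l1)) l1 l2) as [M HM].
  - unfold l2; lra.
  - unfold l1, l2; apply Rabs_def1; lra.
  - exists M; intros n Hn; specialize (HM n Hn); rewrite Hbinet.
    replace (l1 - l2) with s by (unfold l1, l2; field).
    replace (2*x - (a*x+b) + s) with (2 * (x - l2)) by (unfold l2; field).
    replace (2 * (x - l2) * (((x - l2) * l1^n - (x - l1) * l2^n) / s))
      with (2 / s * ((x - l2) * ((x - l2) * l1^n + - (x - l1) * l2^n))) by (field; lra).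
    apply Rmult_lt_0_compat; [apply Rdiv_lt_0_compat|]; lra.
Qed.

Lemma Wr_eventually_root_across_g_root a b c d x1 x2 : x1 < x2 ->
  0 < char_disc a b c d x1 -> 0 < char_disc a b c d x2 -> 0 < a*x1+b -> 0 < a*x2+b ->
  0 < g_poly a b c d x1 -> 2*x1 - (a*x1+b) < 0 -> g_poly a b c d x2 < 0 ->
  exists M, forall n, (M <= n)%nat -> exists z, x1 < z < x2 /\ Wr a b c d n z = 0.
Proof.
  intros Hx HD1 HD2 HA1 HA2 Hg1 HL1 Hg2.
  pose proof (g_poly_char_disc a b c d x1) as E1; pose proof (g_poly_char_disc a b c d x2) as E2.
  assert (Hs1 : sqrt (char_disc a b c d x1) * sqrt (char_disc a b c d x1) = char_disc a b c d x1)
    by (apply sqrt_sqrt; lra).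
  assert (Hs2 : sqrt (char_disc a b c d x2) * sqrt (char_disc a b c d x2) = char_disc a b c d x2)
    by (apply sqrt_sqrt; lra).
  pose proof (sqrt_lt_R0 _ HD1); pose proof (sqrt_lt_R0 _ HD2).
  assert (He1 : 2*x1 - (a*x1+b) + sqrt (char_disc a b c d x1) < 0) by nra.
  assert (He2 : 0 < 2*x2 - (a*x2+b) + sqrt (char_disc a b c d x2)) by nra.
  destruct (Wr_eventually_sign a b c d x1 HD1 HA1 ltac:(lra)) as [M1 HM1].
  destruct (Wr_eventually_sign a b c d x2 HD2 HA2 ltac:(lra)) as [M2 HM2].
  exists (max M1 M2); intros n Hn.
  specialize (HM1 n ltac:(lia)); specialize (HM2 n ltac:(lia)).
  assert (Wr a b c d n x1 < 0) by nra; assert (0 < Wr a b c d n x2) by nra.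
  apply ivt_open; [apply Wr_continuous | lra | nra].
Qed.

Lemma pi_over_n_bounds n : (3 <= n)%nat -> 0 < PI / INR n < PI / 2.
Proof.
  intros Hn; apply le_INR in Hn; simpl in Hn; pose proof PI_RGT_0.
  split; [apply Rdiv_lt_0_compat; lra|].
  apply Rmult_lt_compat_l; [lra|]; apply Rinv_lt_contravar; lra.
Qed.

Lemma sin_pi_over_n_sqr_small k : 0 < k ->
  exists M, forall n, (M <= n)%nat -> (3 <= n)%nat /\ sin (PI / INR n) ^ 2 < k.
Proof.
  intros Hk; destruct (INR_archimed k 16 Hk) as [N HN].
  exists (max N 3); intros n Hn; split; [lia|].
  destruct (pi_over_n_bounds n ltac:(lia)) as [Ht0 Ht1].
  assert (Hn3 : 3 <= INR n) by (replace 3 with (INR 3) by (simpl; lra); apply le_INR; lia).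
  assert (HnN : INR N <= INR n) by (apply le_INR; lia).
  pose proof PI_4; pose proof (sin_lt_x _ Ht0); pose proof (sin_gt_0 (PI / INR n) Ht0 ltac:(lra)).
  assert (Hsq : PI / INR n * (PI / INR n) * INR n < 16).
  { replace (PI / INR n * (PI / INR n) * INR n) with (PI * PI / INR n) by (field; lra).
    apply (Rmult_lt_reg_r (INR n)); [lra|]; unfold Rdiv; rewrite Rmult_assoc, Rinv_l; nra. }
  assert (Ht : PI / INR n * (PI / INR n) < k) by nra.
  simpl; nra.
Qed.

Lemma Wr_at_pi_over_n a b c d x n : (3 <= n)%nat -> c*x+d < 0 ->
  a*x+b = 2 * sqrt (-(c*x+d)) * cos (PI / INR n) ->
  Wr a b c d n x = - sqrt (-(c*x+d)) ^ n.
Proof.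
  intros Hn HB HA; destruct (pi_over_n_bounds n Hn) as [Ht0 Ht1].
  rewrite (Wr_trig a b c d x (sqrt (-(c*x+d))) (PI / INR n)); auto.
  - replace (INR n * (PI / INR n)) with PI
      by (field; apply not_0_INR; lia).
    rewrite cos_PI, sin_PI; ring.
  - apply sqrt_lt_R0; lra.
  - apply sqrt_sqrt; lra.
  - apply Rgt_not_eq, sin_gt_0; lra.
Qed.

(* [A x = 2 sqrt (-B x) cos t] says that the complex characteristic roots at [x] have argument [t]. *)
Lemma char_root_argument_between a b c d y p t : y < p ->
  char_disc a b c d y < 0 -> 0 <= char_disc a b c d p -> 0 < a*y+b -> 0 < a*p+b ->
  c*y+d < 0 -> c*p+d < 0 -> 0 < sin t -> 0 < cos t ->
  sin t ^ 2 * (4*(c*y+d)) > char_disc a b c d y ->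
  exists x, y < x < p /\ c*x+d < 0 /\ a*x+b = 2 * sqrt (-(c*x+d)) * cos t.
Proof.
  intros Hyp HDy HDp HAy HAp HBy HBp Hsn Hcs Hsmall.
  pose proof (sin2_cos2 t) as Hsc; rewrite !Rsqr_pow2 in Hsc.
  destruct (ivt_open (fun x => (a*x+b)^2 + 4*cos t^2*(c*x+d)) y p) as [x [Hx Hhx]].
  - apply derivable_continuous; reg.
  - auto.
  - unfold char_disc in *; replace (cos t^2) with (1 - sin t^2) by lra.
    assert (0 < sin t^2) by (apply pow_lt; lra).
    apply Rmult_neg_pos; nra.
  - simpl in Hhx.
    assert (HAx : 0 < a*x+b) by (apply (affine_pos_between a b y p); lra).
    assert (HBx : c*x+d < 0).
    { enough (0 < -c*x + -d) by lra; apply (affine_pos_between (-c) (-d) y p); lra. }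
    exists x; split; [lra | split; [lra|]].
    set (r := sqrt (-(c*x+d))).
    assert (Hr : 0 < r) by (apply sqrt_lt_R0; lra).
    assert (Hrr : r * r = -(c*x+d)) by (apply sqrt_sqrt; lra).
    assert (E : (a*x+b - 2*r*cos t) * (a*x+b + 2*r*cos t) = 0) by nra.
    assert (0 < a*x+b + 2*r*cos t) by nra.
    destruct (Rmult_integral _ _ E); lra.
Qed.

(* Where the characteristic roots are complex, [Wr n] oscillates; at the point where their
   argument is [PI/n] it takes the value [-r^n], which forces a root near an endpoint at which
   [Wr n] stays positive. *)
Lemma Wr_eventually_root_oscillating a b c d y p : y < p ->
  char_disc a b c d y < 0 -> 0 <= char_disc a b c d p -> 0 < a*y+b -> 0 < a*p+b ->
  c*y+d < 0 -> c*p+d < 0 -> (forall n, 0 < Wr a b c d n p) ->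
  exists M, forall n, (M <= n)%nat -> exists z, y < z < p /\ Wr a b c d n z = 0.
Proof.
  intros Hyp HDy HDp HAy HAp HBy HBp HW.
  set (k := char_disc a b c d y / (4*(c*y+d))).
  assert (Hk2 : k * (4*(c*y+d)) = char_disc a b c d y) by (unfold k; field; lra).
  assert (Hk : 0 < k) by nra.
  destruct (sin_pi_over_n_sqr_small k Hk) as [M HM]; exists M; intros n Hn.
  destruct (HM n Hn) as [H3 Hsin]; destruct (pi_over_n_bounds n H3) as [Ht0 Ht1].
  destruct (char_root_argument_between a b c d y p (PI / INR n)) as [x [Hx [HBx HA]]]; auto.
  { apply sin_gt_0; lra. }
  { apply cos_gt_0; lra. }
  { nra. }
  assert (HWx : Wr a b c d n x < 0).
  { rewrite (Wr_at_pi_over_n a b c d x n H3 HBx HA).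
    assert (0 < sqrt (-(c*x+d)) ^ n) by (apply pow_lt, sqrt_lt_R0; lra); lra. }
  destruct (ivt_open (Wr a b c d n) x p) as [z [Hz Hz0]].
  - apply Wr_continuous.
  - lra.
  - specialize (HW n); nra.
  - exists z; split; [lra | auto].
Qed.

(** * Limits of zeros *)

Definition zeros_cluster_at (a b c d p : R) : Prop :=
  forall eps, 0 < eps -> exists M, forall n, (M <= n)%nat ->
    exists z, Rabs (z - p) < eps /\ Wr a b c d n z = 0.

Lemma zeros_cluster_intro a b c d p r : 0 < r ->
  (forall e, 0 < e < r -> exists M, forall n, (M <= n)%nat ->
     exists z, p - e < z < p + e /\ Wr a b c d n z = 0) ->
  zeros_cluster_at a b c d p.
Proof.
  intros Hr H eps Heps.
  destruct (H (Rmin eps r / 2)) as [M HM].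
  { pose proof (Rmin_pos _ _ Heps Hr); pose proof (Rmin_r eps r); lra. }
  exists M; intros n Hn; destruct (HM n Hn) as [z [Hz Hz0]].
  exists z; split; auto.
  pose proof (Rmin_pos _ _ Heps Hr); pose proof (Rmin_l eps r); apply Rabs_def1; lra.
Qed.

Lemma zeros_cluster_reflect a b c d p :
  zeros_cluster_at a (-b) (-c) d p -> zeros_cluster_at a b c d (-p).
Proof.
  intros H eps Heps; destruct (H eps Heps) as [M HM]; exists M; intros n Hn.
  destruct (HM n Hn) as [z [Hz Hz0]]; exists (-z); split.
  - replace (-z - -p) with (-(z - p)) by ring; rewrite Rabs_Ropp; auto.
  - rewrite Wr_reflect in Hz0; pose proof (pow_nonzero (-1) n ltac:(lra)).
    destruct (Rmult_integral _ _ Hz0); [contradiction | auto].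
Qed.

Lemma Rinv_INR_succ_le j k : (k <= j)%nat -> / (INR j + 1) <= / (INR k + 1).
Proof. intros Hkj; apply le_INR in Hkj; pose proof (pos_INR k); apply Rinv_le_contravar; lra. Qed.

(* Taking this witness for every [n] yields a sequence converging to [p]. *)
Lemma closest_witness (Q : R -> Prop) p n : (exists z, Q z) ->
  exists z, Q z /\ forall k, (k <= n)%nat ->
    (exists z', Rabs (z' - p) < / (INR k + 1) /\ Q z') -> Rabs (z - p) < / (INR k + 1).
Proof.
  intros [z0 Hz0]; induction n as [|n [z [Hz Hbest]]].
  - destruct (classic (exists z', Rabs (z' - p) < / (INR 0 + 1) /\ Q z')) as [[z [Hzp Hz]]|Hno].
    + exists z; split; auto; intros k Hk _; replace k with 0%nat by lia; auto.
    + exists z0; split; auto; intros k Hk Hnear; replace k with 0%nat in Hnear by lia.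
      contradiction.
  - destruct (classic (exists z', Rabs (z' - p) < / (INR (S n) + 1) /\ Q z'))
      as [[z' [Hz'p Hz']]|Hno].
    + exists z'; split; auto; intros k Hk _; pose proof (Rinv_INR_succ_le (S n) k Hk); lra.
    + exists z; split; auto; intros k Hk Hnear.
      destruct (Nat.eq_dec k (S n)) as [->|]; [contradiction | apply Hbest; auto; lia].
Qed.

Lemma seq_of_eventually_near (P : nat -> R -> Prop) p :
  (forall eps, 0 < eps -> exists M, forall n, (M <= n)%nat ->
     exists z, Rabs (z - p) < eps /\ P n z) ->
  exists N (z : nat -> R), (forall n, (N <= n)%nat -> P n (z n)) /\
    forall eps, 0 < eps -> exists M, forall n, (M <= n)%nat -> Rabs (z n - p) < eps.
Proof.
  intros H; destruct (H 1 ltac:(lra)) as [N HN].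
  assert (Hchoice : forall n, exists z, (N <= n)%nat -> P n z /\ forall k, (k <= n)%nat ->
    (exists z', Rabs (z' - p) < / (INR k + 1) /\ P n z') -> Rabs (z - p) < / (INR k + 1)).
  { intros n; destruct (Compare_dec.le_dec N n) as [Hn|Hn].
    - destruct (HN n Hn) as [z0 [_ Hz0]].
      destruct (closest_witness (P n) p n (ex_intro _ z0 Hz0)) as [z Hz]; exists z; auto.
    - exists 0; intros; contradiction. }
  set (z := fun n => proj1_sig (constructive_indefinite_description _ (Hchoice n))).
  assert (Hz : forall n, (N <= n)%nat -> P n (z n) /\ forall k, (k <= n)%nat ->
    (exists z', Rabs (z' - p) < / (INR k + 1) /\ P n z') -> Rabs (z n - p) < / (INR k + 1))
    by (intros n; exact (proj2_sig (constructive_indefinite_description _ (Hchoice n)))).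
  exists N, z; split; [intros n Hn; apply Hz; auto|].
  intros eps Heps; destruct (INR_archimed eps 1 Heps) as [k Hk].
  assert (Hk1 : / (INR k + 1) < eps).
  { pose proof (pos_INR k); apply (Rmult_lt_reg_r (INR k + 1)); [lra|].
    rewrite Rinv_l; lra. }
  destruct (H (/ (INR k + 1))) as [Mk HMk]; [apply Rinv_0_lt_compat; pose proof (pos_INR k); lra|].
  exists (max N (max Mk k)); intros n Hn.
  pose proof (proj2 (Hz n ltac:(lia)) k ltac:(lia) (HMk n ltac:(lia))); lra.
Qed.

Lemma limit_of_zeros_of_cluster a b c d p :
  zeros_cluster_at a b c d p -> limit_of_zeros a b c d p.
Proof.
  intros H.
  destruct (seq_of_eventually_near (fun n z => Wr a b c d n z = 0) p H) as [N [z [Hz Hconv]]].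
  exists N, (fun n => (z n, 0)); split.
  - intros n Hn; rewrite Wc_real, Hz; auto.
  - intros eps Heps; destruct (Hconv (Rmin eps 1)) as [M HM]; [apply Rmin_pos; lra|].
    exists M; intros n Hn; specialize (HM n Hn); simpl.
    pose proof (Rmin_l eps 1); pose proof (Rmin_r eps 1); pose proof (Rabs_pos (z n - p)).
    rewrite Rsqr_0, Rplus_0_r, Rsqr_abs; unfold Rsqr; nra.
Qed.

Lemma right_endpoint_disc_root a b c d q p : q < p ->
  char_disc a b c d p = 0 -> 0 < a*p+b -> c*p+d < 0 -> 0 <= 2*p - (a*p+b) ->
  (forall y, q < y < p -> char_disc a b c d y < 0 /\ 0 < a*y+b /\ c*y+d < 0) ->
  (forall n, 0 < Wr a b c d n p) /\ zeros_cluster_at a b c d p.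
Proof.
  intros Hqp HD HA HB HL Hy.
  assert (Hpos : forall n, 0 < Wr a b c d n p).
  { intros n; set (l := (a*p+b)/2).
    assert (Hl : 0 < l) by (unfold l; lra).
    pose proof (Wr_double_root a b c d p l ltac:(unfold l; lra)
      ltac:(unfold l, char_disc in *; nra) n) as E.
    assert (0 < l^n) by (apply pow_lt; lra).
    assert (0 < l + INR n * (p - l)) by (pose proof (pos_INR n); unfold l in *; nra).
    nra. }
  split; auto.
  apply (zeros_cluster_intro a b c d p (p - q)); [lra|].
  intros e He; destruct (Hy (p - e)) as [HDy [HAy HBy]]; [lra|].
  destruct (Wr_eventually_root_oscillating a b c d (p - e) p) as [M HM]; try lra; auto.
  exists M; intros n Hn; destruct (HM n Hn) as [z [Hz Hz0]]; exists z; split; [lra | auto].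
Qed.

Lemma right_endpoint_g_root a b c d lo q hi : lo < q < hi -> 0 < q ->
  g_poly a b c d q = 0 ->
  (forall x, lo < x < hi -> 0 < char_disc a b c d x /\ 0 < a*x+b) ->
  (forall x, lo < x < q -> 0 < g_poly a b c d x /\ 2*x - (a*x+b) < 0) ->
  (forall x, q < x < hi -> g_poly a b c d x < 0) ->
  (forall n, 0 < Wr a b c d n q) /\ zeros_cluster_at a b c d q.
Proof.
  intros Hq Hq0 Hg HDA Hleft Hright; split.
  - intros n; rewrite (Wr_g_root a b c d q Hg); apply pow_lt; lra.
  - apply (zeros_cluster_intro a b c d q (Rmin (q - lo) (hi - q)));
      [apply Rmin_pos; lra|].
    intros e He; pose proof (Rmin_l (q - lo) (hi - q)); pose proof (Rmin_r (q - lo) (hi - q)).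
    destruct (HDA (q - e)) as [HD1 HA1]; [lra|]; destruct (HDA (q + e)) as [HD2 HA2]; [lra|].
    destruct (Hleft (q - e)) as [Hg1 HL1]; [lra|].
    destruct (Wr_eventually_root_across_g_root a b c d (q - e) (q + e)) as [M HM];
      try lra; auto; [apply Hright; lra|].
    exists M; intros n Hn; apply HM; auto.
Qed.

Lemma left_endpoint_disc_root a b c d p q : p < q ->
  char_disc a b c d p = 0 -> a*p+b < 0 -> c*p+d < 0 -> 2*p - (a*p+b) <= 0 ->
  (forall y, p < y < q -> char_disc a b c d y < 0 /\ a*y+b < 0 /\ c*y+d < 0) ->
  (forall n, 0 < (-1)^n * Wr a b c d n p) /\ zeros_cluster_at a b c d p.
Proof.
  intros Hpq HD HA HB HL Hy.
  destruct (right_endpoint_disc_root a (-b) (-c) d (-q) (-p)) as [Hpos Hacc];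
    rewrite ?char_disc_reflect, ?Ropp_involutive; try lra.
  - intros y Hy'; rewrite char_disc_reflect; destruct (Hy (-y)); lra.
  - split.
    + intros n; specialize (Hpos n); rewrite Wr_reflect, Ropp_involutive in Hpos; auto.
    + rewrite <- (Ropp_involutive p); apply zeros_cluster_reflect; auto.
Qed.

Lemma left_endpoint_g_root a b c d lo q hi : lo < q < hi -> q < 0 ->
  g_poly a b c d q = 0 ->
  (forall x, lo < x < hi -> 0 < char_disc a b c d x /\ a*x+b < 0) ->
  (forall x, lo < x < q -> g_poly a b c d x < 0) ->
  (forall x, q < x < hi -> 0 < g_poly a b c d x /\ 0 < 2*x - (a*x+b)) ->
  (forall n, 0 < (-1)^n * Wr a b c d n q) /\ zeros_cluster_at a b c d q.
Proof.
  intros Hq Hq0 Hg HDA Hleft Hright.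
  destruct (right_endpoint_g_root a (-b) (-c) d (-hi) (-q) (-lo)) as [Hpos Hacc];
    rewrite ?g_poly_reflect, ?Ropp_involutive; try lra.
  - intros x Hx; rewrite char_disc_reflect; destruct (HDA (-x)); lra.
  - intros x Hx; rewrite g_poly_reflect; destruct (Hright (-x)); lra.
  - intros x Hx; rewrite g_poly_reflect; apply Hleft; lra.
  - split.
    + intros n; specialize (Hpos n); rewrite Wr_reflect, Ropp_involutive in Hpos; auto.
    + rewrite <- (Ropp_involutive q); apply zeros_cluster_reflect; auto.
Qed.

(** * The roots of [g] and the choice of [(u, v)] *)

Lemma u_case1 a b c d : case1 a b c d -> u a b c d = xDm a b c d.
Proof.
  unfold case1, u, uv; intros [Ha HF].
  destruct (Rlt_dec a 2); [|lra]; destruct (Rle_dec (Ff a b c d) 0); [reflexivity | lra].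
Qed.

Lemma u_case3 a b c d : case3 a b c d -> u a b c d = xgp a b c d.
Proof.
  unfold case3, u, uv; intros [Ha HF].
  destruct (Rlt_dec a 2); [|lra]; destruct (Rle_dec (Ff a b c d) 0); [lra|].
  destruct (Rlt_dec a 1); [reflexivity | lra].
Qed.

Lemma u_otherwise a b c d : ~ case1 a b c d -> ~ case3 a b c d -> u a b c d = xgm a b c d.
Proof.
  unfold case1, case3, u, uv; intros H1 H3.
  destruct (Rlt_dec a 2); [destruct (Rle_dec (Ff a b c d) 0); [tauto|]|].
  - destruct (Rlt_dec a 1); [exfalso; apply H3; split; lra | reflexivity].
  - destruct (Rlt_dec 2 a); [destruct (Rlt_dec (Ff a b c d) 0)|]; reflexivity.
Qed.

Lemma v_case2 a b c d : case2 a b c d -> v a b c d = xgp a b c d.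
Proof.
  unfold case2, v, uv; intros [Ha HF].
  destruct (Rlt_dec a 2); [lra|]; destruct (Rlt_dec 2 a); [|lra].
  destruct (Rlt_dec (Ff a b c d) 0); [reflexivity | lra].
Qed.

Lemma v_otherwise a b c d : ~ case2 a b c d -> v a b c d = xDp a b c d.
Proof.
  unfold case2, v, uv; intros H2.
  destruct (Rlt_dec a 2); [destruct (Rle_dec (Ff a b c d) 0);
    [|destruct (Rlt_dec a 1)]; reflexivity|].
  destruct (Rlt_dec 2 a); [|reflexivity].
  destruct (Rlt_dec (Ff a b c d) 0); [exfalso; apply H2; split; lra | reflexivity].
Qed.

Lemma xgm_at_a1 a b c d : a = 1 -> xgm a b c d = - d / (b + c).
Proof. unfold xgm; destruct (Req_EM_T a 1); [reflexivity | contradiction]. Qed.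

Lemma xgm_le_xgp a b c d : xgm a b c d <= xgp a b c d.
Proof.
  unfold xgm, xgp; destruct (Req_EM_T a 1); [lra|].
  assert (0 < Rabs (1 - a)) by (apply Rabs_pos_lt; lra).
  assert (0 <= sqrt (Deltag a b c d) / (2 * Rabs (1 - a)))
    by (apply Rmult_le_pos; [apply sqrt_pos | left; apply Rinv_0_lt_compat; lra]).
  lra.
Qed.

Lemma g_poly_factor a b c d x : a <> 1 -> 0 <= Deltag a b c d ->
  g_poly a b c d x = (1-a) * (x - xgm a b c d) * (x - xgp a b c d).
Proof.
  intros Ha HD; unfold g_poly, xgm, xgp; destruct (Req_EM_T a 1) as [E|_]; [contradiction|].
  assert (Hr : sqrt (Deltag a b c d) * sqrt (Deltag a b c d) = Deltag a b c d)
    by (apply sqrt_sqrt; auto).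
  assert (Hq : Rabs (1-a) * Rabs (1-a) = (1-a) * (1-a))
    by (rewrite <- Rabs_mult; apply Rabs_pos_eq; nra).
  assert (Hq0 : Rabs (1-a) <> 0) by (apply Rabs_no_R0; lra).
  set (r := sqrt (Deltag a b c d)) in *; set (q := Rabs (1-a)) in *.
  transitivity ((1-a) * (x - (b+c)/(2*(1-a)))^2 - (1-a) * (r*r) / (4*(q*q))).
  - rewrite Hr, Hq; unfold Deltag; field; lra.
  - field; lra.
Qed.

(* [g] minus its value at [q] factors as [(x - q)] times an affine function of [x]. *)
Lemma g_poly_sign_change a b c d y q z : y < q < z -> g_poly a b c d q = 0 ->
  g_poly a b c d y < 0 -> 0 < g_poly a b c d z ->
  (forall x, y <= x < q -> g_poly a b c d x < 0) /\
  (forall x, q < x <= z -> 0 < g_poly a b c d x).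
Proof.
  intros Hq Hg Hy Hz.
  assert (E : forall x, g_poly a b c d x =
            (x - q) * ((1-a) * x + ((1-a) * q - (b+c)))).
  { intros x; rewrite <- (Rminus_0_r (g_poly a b c d x)), <- Hg at 1; unfold g_poly; ring. }
  rewrite E in Hy, Hz.
  assert (Hh : forall x, y <= x <= z -> 0 < (1-a) * x + ((1-a) * q - (b+c))).
  { intros x Hx; apply (affine_pos_between _ _ y z); [lra | nra | nra]. }
  split; intros x Hx; rewrite E; specialize (Hh x ltac:(lra)); nra.
Qed.

Lemma between_roots x r1 r2 : r1 <= r2 -> (x - r1) * (x - r2) < 0 -> r1 < x < r2.
Proof.
  intros Hr H; split; apply Rnot_le_lt; intros Hx.
  - assert (0 <= (r1 - x) * (r2 - x)) by (apply Rmult_le_pos; lra); nra.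
  - assert (0 <= (x - r1) * (x - r2)) by (apply Rmult_le_pos; lra); nra.
Qed.

Lemma outside_roots x r1 r2 : r1 <= r2 -> 0 < (x - r1) * (x - r2) -> x < r1 \/ r2 < x.
Proof.
  intros Hr H; destruct (Rlt_le_dec x r1); [left; auto|].
  destruct (Rlt_le_dec r2 x); [right; auto|].
  assert (0 <= (x - r1) * (r2 - x)) by (apply Rmult_le_pos; lra); nra.
Qed.

(* [L x := 2x - A x] is twice the gap between [x] and the double characteristic root [A x / 2];
   its sign at [x_Delta^-] and [x_Delta^+] decides which formula gives [u] and [v]. *)
Lemma L_factor_w a b x : a <> 2 -> 2*x - (a*x+b) = (2-a) * (x - b/(2-a)).
Proof. intros; field; lra. Qed.

Lemma Ff_char_disc a b c d : a <> 2 ->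
  4 * Ff a b c d = (2-a)^2 * char_disc a b c d (b/(2-a)).
Proof. intros; unfold Ff, char_disc; field; lra. Qed.

Lemma Deltag_eq a b c d : a <> 0 -> Deltag a b c d = Ff a b c d + DeltaD a b c d.
Proof. intros; unfold Deltag, Ff, DeltaD, xA; field; auto. Qed.

Lemma g_poly_at_char_disc_root a b c d x : char_disc a b c d x = 0 ->
  4 * g_poly a b c d x = (2*x - (a*x+b))^2.
Proof. intros HD; rewrite g_poly_char_disc, HD; ring. Qed.

Lemma u_between_g_sign_change a b c d w h : a < 2 -> 0 < Ff a b c d -> w < h -> w < 0 ->
  0 <= Deltag a b c d -> g_poly a b c d w < 0 -> 0 < g_poly a b c d 0 -> 0 < g_poly a b c d h ->
  w < u a b c d < h /\ u a b c d < 0 /\ g_poly a b c d (u a b c d) = 0.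
Proof.
  intros Ha2 HF Hwh Hw0 HDg Hgw Hg0 Hgh; pose proof (xgm_le_xgp a b c d) as Hle.
  destruct (Rlt_le_dec a 1) as [Ha1|Ha1].
  - rewrite u_case3 by (split; lra).
    pose proof (fun x => g_poly_factor a b c d x ltac:(lra) HDg) as Hfac.
    rewrite (Hfac (xgp a b c d)), Rminus_diag, Rmult_0_r.
    rewrite Hfac in Hgw, Hg0, Hgh.
    destruct (between_roots w _ _ Hle ltac:(nra)).
    destruct (outside_roots 0 _ _ Hle ltac:(nra));
    destruct (outside_roots h _ _ Hle ltac:(nra)); repeat split; lra.
  - rewrite u_otherwise by (unfold case1, case3; intros [? ?]; lra).
    destruct (Req_dec a 1) as [Ea|Ea].
    + rewrite xgm_at_a1 by auto; unfold g_poly in *; rewrite Ea in *.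
      assert (Hbc : b + c < 0) by nra.
      assert (Hq : (b + c) * (- d / (b + c)) = -d) by (field; lra).
      repeat split; nra.
    + pose proof (fun x => g_poly_factor a b c d x Ea HDg) as Hfac.
      rewrite (Hfac (xgm a b c d)), Rminus_diag, Rmult_0_r, Rmult_0_l.
      rewrite Hfac in Hgw, Hg0, Hgh.
      destruct (between_roots 0 _ _ Hle ltac:(nra)).
      destruct (between_roots h _ _ Hle ltac:(nra)).
      destruct (outside_roots w _ _ Hle ltac:(nra)); repeat split; lra.
Qed.

Section Configuration.
Variables a b c d : R.
Hypotheses (ha : 0 < a) (hc : 0 < c) (hb : b < 0) (hd : d < 0) (hAB : xA a b < xB c d).

Lemma xA_pos : 0 < xA a b.
Proof. unfold xA; apply Rdiv_lt_0_compat; lra. Qed.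

Lemma xA_root : a * xA a b + b = 0.
Proof. unfold xA; field; lra. Qed.

Lemma xB_root : c * xB c d + d = 0.
Proof. unfold xB; field; lra. Qed.

Lemma lin_A_sign x : (x < xA a b -> a*x+b < 0) /\ (xA a b < x -> 0 < a*x+b).
Proof. pose proof xA_root; split; intros; nra. Qed.

Lemma lin_B_neg x : x < xB c d -> c*x+d < 0.
Proof. pose proof xB_root; intros; nra. Qed.

Lemma DeltaD_gt : c^2 < DeltaD a b c d.
Proof.
  assert (HK : 0 < b*c - a*d).
  { pose proof xA_root; pose proof xB_root; pose proof (Rmult_lt_0_compat a c ha hc); nra. }
  unfold DeltaD, xA; replace (c ^ 2 - a ^ 2 * (c * (- b / a) + d)) with (c^2 + a*(b*c - a*d))
    by (field; lra); nra.
Qed.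

Lemma char_disc_factor x :
  char_disc a b c d x = a^2 * (x - xDm a b c d) * (x - xDp a b c d).
Proof.
  pose proof DeltaD_gt; unfold xDm, xDp.
  assert (Hr : sqrt (DeltaD a b c d) * sqrt (DeltaD a b c d) = DeltaD a b c d)
    by (apply sqrt_sqrt; nra).
  set (r := sqrt (DeltaD a b c d)) in *.
  transitivity (a^2 * (x - xA a b + 2*c/a^2)^2 - 4 * (r*r) / a^2).
  - rewrite Hr; unfold char_disc, DeltaD, xA; field; lra.
  - field; lra.
Qed.

Lemma xD_around_xA : xDm a b c d < xA a b < xDp a b c d.
Proof.
  pose proof DeltaD_gt; unfold xDm, xDp.
  assert (Hr0 : 0 <= sqrt (DeltaD a b c d)) by apply sqrt_pos.
  assert (Hr : sqrt (DeltaD a b c d) * sqrt (DeltaD a b c d) = DeltaD a b c d)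
    by (apply sqrt_sqrt; nra).
  assert (Hc : c < sqrt (DeltaD a b c d)) by nra.
  assert (Ha2 : 0 < a^2) by nra.
  split.
  - enough ((-2*c - 2*sqrt (DeltaD a b c d)) / a^2 < 0) by lra.
    unfold Rdiv; apply Rmult_neg_pos; [lra | apply Rinv_0_lt_compat; lra].
  - enough (0 < (-2*c + 2*sqrt (DeltaD a b c d)) / a^2) by lra.
    apply Rdiv_lt_0_compat; lra.
Qed.

Lemma char_disc_pos_iff x :
  0 < char_disc a b c d x <-> x < xDm a b c d \/ xDp a b c d < x.
Proof.
  pose proof xD_around_xA as Hm; rewrite char_disc_factor.
  assert (Ha2 : 0 < a^2) by nra; split.
  - intros Hx; destruct (Rlt_le_dec x (xDm a b c d)); [left; auto|].
    destruct (Rlt_le_dec (xDp a b c d) x); [right; auto|].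
    assert (0 <= (x - xDm a b c d) * (xDp a b c d - x)) by (apply Rmult_le_pos; lra); nra.
  - intros [Hx|Hx]; [assert (0 < (xDm a b c d - x) * (xDp a b c d - x))
                 | assert (0 < (x - xDm a b c d) * (x - xDp a b c d))];
      try (apply Rmult_lt_0_compat; lra); nra.
Qed.

Lemma char_disc_neg_iff x :
  char_disc a b c d x < 0 <-> xDm a b c d < x < xDp a b c d.
Proof.
  pose proof xD_around_xA as Hm; rewrite char_disc_factor.
  assert (Ha2 : 0 < a^2) by nra; split.
  - intros Hx; destruct (Rle_lt_dec x (xDm a b c d));
      [assert (0 <= (xDm a b c d - x) * (xDp a b c d - x)) by (apply Rmult_le_pos; lra); nra|].
    destruct (Rle_lt_dec (xDp a b c d) x); [|lra].
    assert (0 <= (x - xDm a b c d) * (x - xDp a b c d)) by (apply Rmult_le_pos; lra); nra.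
  - intros Hx; assert (0 < (x - xDm a b c d) * (xDp a b c d - x)) by (apply Rmult_lt_0_compat; lra).
    nra.
Qed.

Lemma char_disc_xDm : char_disc a b c d (xDm a b c d) = 0.
Proof. rewrite char_disc_factor; ring. Qed.

Lemma char_disc_xDp : char_disc a b c d (xDp a b c d) = 0.
Proof. rewrite char_disc_factor; ring. Qed.

Lemma xDp_lt_xB : xDp a b c d < xB c d.
Proof.
  pose proof xD_around_xA; pose proof xB_root.
  assert (HA : 0 < a * xB c d + b) by (apply lin_A_sign; lra).
  assert (HD : 0 < char_disc a b c d (xB c d)) by (unfold char_disc; nra).
  apply char_disc_pos_iff in HD; lra.
Qed.

Lemma uv_real_holds : uv_real a b c d.
Proof.
  pose proof DeltaD_gt; split; [nra|]; intros Hn1.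
  assert (HF : a < 2 -> 0 < Ff a b c d).
  { intros Ha2; destruct (Rle_lt_dec (Ff a b c d) 0); auto; exfalso; apply Hn1; split; auto. }
  split.
  - intros _; destruct (Rlt_le_dec a 2) as [Ha2|Ha2].
    + rewrite Deltag_eq by lra; specialize (HF Ha2); nra.
    + unfold Deltag; assert (0 < d * (1-a)) by nra; pose proof (pow2_ge_0 (b+c)); lra.
  - intros -> Hbc; specialize (HF ltac:(lra)); unfold Ff in HF.
    replace c with (-b) in HF by lra; nra.
Qed.

(** * The right endpoint [v] *)

Lemma right_endpoint_xDp : 0 <= 2 * xDp a b c d - (a * xDp a b c d + b) ->
  (forall n, 0 < Wr a b c d n (xDp a b c d)) /\ zeros_cluster_at a b c d (xDp a b c d).
Proof.
  pose proof xD_around_xA; pose proof xDp_lt_xB; intros HL.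
  apply (right_endpoint_disc_root a b c d (xA a b)); try lra.
  - apply char_disc_xDp.
  - apply lin_A_sign; lra.
  - apply lin_B_neg; lra.
  - intros y Hy; split; [apply char_disc_neg_iff; lra|].
    split; [apply lin_A_sign | apply lin_B_neg]; lra.
Qed.

Lemma w_gt_xA : 2 < a -> xA a b < b/(2-a).
Proof.
  pose proof xA_root; pose proof xA_pos; intros Ha2.
  apply (Rmult_lt_reg_l (a-2)); [lra|].
  replace ((a-2) * (b/(2-a))) with (-b) by (field; lra); nra.
Qed.

Lemma L_xDp_nonneg : ~ case2 a b c d -> 0 <= 2 * xDp a b c d - (a * xDp a b c d + b).
Proof.
  pose proof xD_around_xA; pose proof xA_pos; intros H2.
  destruct (Rle_lt_dec a 2) as [Ha2|Ha2]; [nra|].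
  assert (HF : 0 <= Ff a b c d) by (unfold case2 in H2; destruct (Rlt_dec (Ff a b c d) 0); lra).
  pose proof (w_gt_xA Ha2); pose proof (Ff_char_disc a b c d ltac:(lra)).
  assert (Hsq : 0 < (2-a)^2) by (simpl; nra).
  assert (HDw : 0 <= char_disc a b c d (b/(2-a))) by nra.
  assert (Hpw : xDp a b c d <= b/(2-a)).
  { destruct (Rle_lt_dec (xDp a b c d) (b/(2-a))); auto.
    assert (char_disc a b c d (b/(2-a)) < 0) by (apply char_disc_neg_iff; lra); lra. }
  rewrite L_factor_w by lra; nra.
Qed.

Lemma g_poly_xB_neg : 2 < a -> Ff a b c d < 0 -> g_poly a b c d (xB c d) < 0.
Proof.
  intros Ha2 HF; pose proof xA_pos; pose proof xB_root.
  assert (E : d*(a-2) - b*c < 0) by (unfold Ff in HF; nra).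
  assert (E' : (1-a) * xB c d - b < 0) by nra.
  unfold g_poly; nra.
Qed.

Lemma xgp_case2 : case2 a b c d ->
  xDp a b c d < xgp a b c d < xB c d /\
  (forall n, 0 < Wr a b c d n (xgp a b c d)) /\ zeros_cluster_at a b c d (xgp a b c d).
Proof.
  intros [Ha2 HF].
  pose proof xD_around_xA; pose proof xA_pos; pose proof xDp_lt_xB; pose proof xB_root.
  pose proof (w_gt_xA Ha2); pose proof (Ff_char_disc a b c d ltac:(lra)).
  assert (Hsq : 0 < (2-a)^2) by (simpl; nra).
  assert (Hw : char_disc a b c d (b/(2-a)) < 0) by nra.
  apply char_disc_neg_iff in Hw.
  assert (HL : forall x, xDp a b c d <= x -> 2*x - (a*x+b) < 0)
    by (intros x Hx; rewrite L_factor_w by lra; nra).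
  assert (Hgp : 0 < g_poly a b c d (xDp a b c d)).
  { pose proof (g_poly_at_char_disc_root _ _ _ _ _ char_disc_xDp).
    specialize (HL (xDp a b c d) ltac:(lra)); nra. }
  assert (HDg : 0 <= Deltag a b c d) by (unfold Deltag; pose proof (pow2_ge_0 (b+c)); nra).
  pose proof (fun x => g_poly_factor a b c d x ltac:(lra) HDg) as Hfac.
  pose proof (xgm_le_xgp a b c d) as Hle.
  set (q1 := xgm a b c d) in *; set (q2 := xgp a b c d) in *.
  assert (Hp : q1 < xDp a b c d < q2) by (apply between_roots; auto; rewrite Hfac in Hgp; nra).
  pose proof (g_poly_xB_neg Ha2 HF) as HgB.
  assert (HqB : q2 < xB c d).
  { rewrite Hfac in HgB; assert (Hout : 0 < (xB c d - q1) * (xB c d - q2)) by nra.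
    destruct (outside_roots _ _ _ Hle Hout); lra. }
  split; [lra|].
  apply (right_endpoint_g_root a b c d (xDp a b c d) q2 (q2 + 1)); try lra.
  - rewrite Hfac; ring.
  - intros x Hx; split; [apply char_disc_pos_iff; lra | apply lin_A_sign; lra].
  - intros x Hx; split; [|apply HL; lra].
    rewrite Hfac; assert (0 < (x - q1) * (q2 - x)) by (apply Rmult_lt_0_compat; lra); nra.
  - intros x Hx; rewrite Hfac; assert (0 < (x - q1) * (x - q2)) by (apply Rmult_lt_0_compat; lra); nra.
Qed.

Lemma v_spec : xDp a b c d <= v a b c d /\ v a b c d < xB c d /\ 0 < v a b c d /\
  (forall n, 0 < Wr a b c d n (v a b c d)) /\ limit_of_zeros a b c d (v a b c d).
Proof.
  pose proof xD_around_xA; pose proof xA_pos; pose proof xDp_lt_xB.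
  destruct (classic (case2 a b c d)) as [H2|H2].
  - rewrite v_case2 by auto; destruct (xgp_case2 H2) as [Hq [Hpos Hacc]].
    repeat split; try lra; auto; apply limit_of_zeros_of_cluster; auto.
  - rewrite v_otherwise by auto; destruct (right_endpoint_xDp (L_xDp_nonneg H2)) as [Hpos Hacc].
    repeat split; try lra; auto; apply limit_of_zeros_of_cluster; auto.
Qed.

(** * The left endpoint [u] *)

Lemma left_endpoint_xDm : 2 * xDm a b c d - (a * xDm a b c d + b) <= 0 ->
  (forall n, 0 < (-1)^n * Wr a b c d n (xDm a b c d)) /\
  zeros_cluster_at a b c d (xDm a b c d).
Proof.
  pose proof xD_around_xA; pose proof xDp_lt_xB; intros HL.
  apply (left_endpoint_disc_root a b c d _ (xA a b)); try lra.
  - apply char_disc_xDm.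
  - apply lin_A_sign; lra.
  - apply lin_B_neg; lra.
  - intros y Hy; split; [apply char_disc_neg_iff; lra|].
    split; [apply lin_A_sign | apply lin_B_neg]; lra.
Qed.

Lemma case1_xDm : case1 a b c d ->
  2 * xDm a b c d - (a * xDm a b c d + b) <= 0 /\ xDm a b c d < 0.
Proof.
  intros [Ha2 HF]; pose proof (Ff_char_disc a b c d ltac:(lra)).
  assert (Hsq : 0 < (2-a)^2) by (simpl; nra).
  assert (Hw : b/(2-a) < 0) by (apply Rdiv_neg_pos; lra).
  assert (Hmw : xDm a b c d <= b/(2-a)).
  { apply Rnot_lt_le; intros Hlt.
    assert (0 < char_disc a b c d (b/(2-a))) by (apply char_disc_pos_iff; lra); nra. }
  rewrite L_factor_w by lra; split; nra.
Qed.

Lemma g_poly_0_pos : 0 < g_poly a b c d 0.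
Proof. unfold g_poly; simpl; lra. Qed.

Lemma u_g_root_lt2 : a < 2 -> 0 < Ff a b c d ->
  b/(2-a) < u a b c d < xDm a b c d /\ u a b c d < 0 /\
  g_poly a b c d (u a b c d) = 0 /\ g_poly a b c d (b/(2-a)) < 0.
Proof.
  intros Ha2 HF; pose proof xD_around_xA; pose proof xA_pos.
  pose proof (Ff_char_disc a b c d ltac:(lra)).
  assert (Hsq : 0 < (2-a)^2) by (simpl; nra).
  assert (Hw0 : b/(2-a) < 0) by (apply Rdiv_neg_pos; lra).
  assert (HDw : 0 < char_disc a b c d (b/(2-a))) by nra.
  assert (Hwm : b/(2-a) < xDm a b c d) by (apply char_disc_pos_iff in HDw; lra).
  assert (Hgw : g_poly a b c d (b/(2-a)) < 0).
  { pose proof (g_poly_char_disc a b c d (b/(2-a))) as E; rewrite L_factor_w in E by lra; nra. }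
  assert (Hgm : 0 < g_poly a b c d (xDm a b c d)).
  { pose proof (g_poly_at_char_disc_root _ _ _ _ _ char_disc_xDm) as E.
    rewrite L_factor_w in E by lra.
    assert (0 < ((2-a) * (xDm a b c d - b/(2-a)))^2)
      by (apply pow_lt, Rmult_lt_0_compat; lra); lra. }
  assert (HDg : 0 <= Deltag a b c d) by (rewrite Deltag_eq by lra; pose proof DeltaD_gt; nra).
  destruct (u_between_g_sign_change a b c d (b/(2-a)) (xDm a b c d)) as [Hu [Hu0 Hgu]];
    auto using g_poly_0_pos.
Qed.

Lemma L_pos_ge2 x : 2 <= a -> x <= xA a b -> 0 < 2*x - (a*x+b).
Proof.
  pose proof xA_root; pose proof xA_pos; intros Ha2 Hx.
  assert (0 <= (a - 2) * (xA a b - x)) by (apply Rmult_le_pos; lra); nra.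
Qed.

Lemma u_g_root_ge2 : 2 <= a ->
  u a b c d < xDm a b c d /\ u a b c d < 0 /\ g_poly a b c d (u a b c d) = 0 /\
  g_poly a b c d (u a b c d - 1) < 0.
Proof.
  intros Ha2; pose proof xD_around_xA; pose proof g_poly_0_pos as Hg0.
  rewrite u_otherwise by (unfold case1, case3; intros [? ?]; lra).
  assert (Hgm : 0 < g_poly a b c d (xDm a b c d)).
  { pose proof (g_poly_at_char_disc_root _ _ _ _ _ char_disc_xDm).
    pose proof (L_pos_ge2 (xDm a b c d) Ha2 ltac:(lra)); nra. }
  assert (HDg : 0 <= Deltag a b c d) by (unfold Deltag; pose proof (pow2_ge_0 (b+c)); nra).
  pose proof (xgm_le_xgp a b c d) as Hle.
  pose proof (fun x => g_poly_factor a b c d x ltac:(lra) HDg) as Hfac.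
  rewrite !Hfac in Hg0, Hgm; rewrite !Hfac.
  set (q1 := xgm a b c d) in *; set (q2 := xgp a b c d) in *.
  destruct (between_roots 0 q1 q2 Hle ltac:(nra)).
  destruct (between_roots (xDm a b c d) q1 q2 Hle ltac:(nra)).
  repeat split; [lra | lra | ring | nra].
Qed.

Lemma u_g_root : ~ case1 a b c d -> exists y,
  y < u a b c d < xDm a b c d /\ u a b c d < 0 /\ g_poly a b c d (u a b c d) = 0 /\
  g_poly a b c d y < 0 /\
  forall x, u a b c d < x <= xDm a b c d -> 0 < 2*x - (a*x+b).
Proof.
  pose proof xD_around_xA; intros H1.
  destruct (Rlt_le_dec a 2) as [Ha2|Ha2].
  - assert (HF : 0 < Ff a b c d)
      by (destruct (Rle_lt_dec (Ff a b c d) 0); auto; exfalso; apply H1; split; auto).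
    destruct (u_g_root_lt2 Ha2 HF) as [Hu [Hu0 [Hgu Hgw]]].
    exists (b/(2-a)); repeat split; try lra; auto.
    intros x Hx; rewrite L_factor_w by lra; nra.
  - destruct (u_g_root_ge2 Ha2) as [Hu [Hu0 [Hgu Hgy]]].
    exists (u a b c d - 1); repeat split; try lra; auto.
    intros x Hx; apply L_pos_ge2; lra.
Qed.

Lemma u_spec : u a b c d <= xDm a b c d /\ u a b c d < 0 /\
  (forall n, 0 < (-1)^n * Wr a b c d n (u a b c d)) /\ limit_of_zeros a b c d (u a b c d).
Proof.
  pose proof xD_around_xA.
  destruct (classic (case1 a b c d)) as [H1|H1].
  - rewrite u_case1 by auto; destruct (case1_xDm H1) as [HL Hm].
    destruct (left_endpoint_xDm HL) as [Hpos Hacc].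
    repeat split; try lra; auto; apply limit_of_zeros_of_cluster; auto.
  - destruct (u_g_root H1) as [y [Hu [Hu0 [Hgu [Hgy HL]]]]].
    set (q := u a b c d) in *.
    assert (Hgm : 0 < g_poly a b c d (xDm a b c d)).
    { pose proof (g_poly_at_char_disc_root _ _ _ _ _ char_disc_xDm).
      specialize (HL (xDm a b c d) ltac:(lra)); nra. }
    destruct (g_poly_sign_change a b c d y q (xDm a b c d)) as [Hneg Hpos]; auto.
    destruct (left_endpoint_g_root a b c d y q (xDm a b c d)) as [HW Hacc]; auto.
    + intros x Hx; split; [apply char_disc_pos_iff; lra | apply lin_A_sign; lra].
    + intros x Hx; apply Hneg; lra.
    + intros x Hx; split; [apply Hpos | apply HL]; lra.
    + repeat split; try lra; auto; apply limit_of_zeros_of_cluster; auto.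
Qed.

End Configuration.

Theorem lemma3p2 (a b c d : R) (ha : 0 < a) (hc : 0 < c) (hb : b < 0) (hd : d < 0)
  (hAB : xA a b < xB c d) :
  uv_real a b c d /\
  u a b c d <= xDm a b c d /\ xDm a b c d < xA a b /\ xA a b < xDp a b c d /\
  xDp a b c d <= v a b c d /\ v a b c d < xB c d /\
  u a b c d < 0 /\ 0 < v a b c d /\
  (forall n : nat, (-1) ^ n * Wr a b c d n (u a b c d) > 0 /\ Wr a b c d n (v a b c d) > 0) /\
  limit_of_zeros a b c d (u a b c d) /\ limit_of_zeros a b c d (v a b c d).
Proof.
  destruct (xD_around_xA a b c d ha hc hAB) as [HmA HAp].
  destruct (u_spec a b c d ha hc hb hd hAB) as [Hum [Hu0 [HWu Hlu]]].
  destruct (v_spec a b c d ha hc hb hd hAB) as [Hpv [HvB [Hv0 [HWv Hlv]]]].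
  split; [exact (uv_real_holds a b c d ha hc hd hAB)|].
  repeat split; auto; apply Rlt_gt; auto.
Qed.
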